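(* Let $A$ be a unital ring and let $p\in A$ be a full idempotent. Then $\operatorname{sr}(A)\le \operatorname{sr}(pAp)$.
   Context: An idempotent $p$ in a unital ring $A$ is full if $ApA=A$ (the two-sided ideal generated by $p$ is $A$). A row $(a_1,\dots,a_n)\in A^n$ is right unimodular if $\sum_{i=1}^n a_iA=A$. A row $(a_1,\dots,a_n,b)\in A^{n+1}$ is reducible if there exist $c_1,\dots,c_n\in A$ such that $(a_1+bc_1,\dots,a_n+bc_n)$ is right unimodular. The (Bass) stable rank $\operatorname{sr}(A)$ is the least positive integer $n$ such that every right unimodular row in $A^{n+1}$ is reducible, or $\infty$ if no such $n$ exists. The corner $pAp$ is a ring with identity $p$. *)

From mathcomp Require Import all_boot all_order all_algebra.
Set Implicit Arguments. Unset Strict Implicit. Unset Printing Implicit Defensive.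
Import GRing.Theory.
Local Open Scope ring_scope.

Section Defs.
Variable A : pzRingType.

Definition is_idem (p : A) : Prop := p * p = p.

(* ApA = A : every element is a finite sum of elements u * p * v *)
Definition is_full (p : A) : Prop :=
  forall x : A, exists (k : nat) (u v : 'I_k -> A),
    x = \sum_(i < k) u i * p * v i.

Definition right_unimodular (n : nat) (a : 'I_n -> A) : Prop :=
  forall x : A, exists c : 'I_n -> A, \sum_(i < n) a i * c i = x.

(* the row (a_1,...,a_n,b) in A^{n+1}, written as (a, b) *)
Definition right_unimodular_ext (n : nat) (a : 'I_n -> A) (b : A) : Prop :=
  forall x : A, exists (c : 'I_n -> A) (d : A),
    \sum_(i < n) a i * c i + b * d = x.

Definition reducible (n : nat) (a : 'I_n -> A) (b : A) : Prop :=
  exists c : 'I_n -> A, right_unimodular (fun i => a i + b * c i).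

Definition sr_cond (n : nat) : Prop :=
  forall (a : 'I_n -> A) (b : A), right_unimodular_ext a b -> reducible a b.

(* The corner ring pAp: carrier {x | p * x * p = x}, same + and *, unit p. *)
Definition in_corner (p x : A) : Prop := p * x * p = x.

Definition corner_right_unimodular (p : A) (n : nat) (a : 'I_n -> A) : Prop :=
  forall x : A, in_corner p x ->
    exists c : 'I_n -> A, (forall i, in_corner p (c i)) /\
      \sum_(i < n) a i * c i = x.

Definition corner_right_unimodular_ext (p : A) (n : nat) (a : 'I_n -> A) (b : A)
  : Prop :=
  forall x : A, in_corner p x ->
    exists (c : 'I_n -> A) (d : A),
      [/\ (forall i, in_corner p (c i)), in_corner p d &
          \sum_(i < n) a i * c i + b * d = x].

Definition corner_reducible (p : A) (n : nat) (a : 'I_n -> A) (b : A) : Prop :=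
  exists c : 'I_n -> A, (forall i, in_corner p (c i)) /\
    corner_right_unimodular p (fun i => a i + b * c i).

Definition corner_sr_cond (p : A) (n : nat) : Prop :=
  forall (a : 'I_n -> A) (b : A),
    (forall i, in_corner p (a i)) -> in_corner p b ->
    corner_right_unimodular_ext p a b -> corner_reducible p a b.
End Defs.

(* Stable rank as a value in N_{>=1} ∪ {∞} (None = ∞):
   the least positive n satisfying cond, or ∞ if none. *)
Definition is_stable_rank (cond : nat -> Prop) (s : option nat) : Prop :=
  match s with
  | Some n => (0 < n)%N /\ cond n /\ (forall m, (0 < m)%N -> (m < n)%N -> ~ cond m)
  | None => forall n, (0 < n)%N -> ~ cond n
  end.

Definition ext_le (s t : option nat) : Prop :=
  match s, t with
  | _, None => True
  | None, Some _ => False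
  | Some m, Some n => (m <= n)%N
  end.

From mathcomp Require Import all_boot all_order all_algebra.
From HB Require Import structures.
Set Implicit Arguments. Unset Strict Implicit. Unset Printing Implicit Defensive.
Import GRing.Theory.
Local Open Scope ring_scope.

(* Let B = pAp. Fullness of p gives a row S and a column T over A with S T = 1,
   S p = S and p T = T, so that x |-> T x S embeds A as a corner of the matrix
   ring M_k(B). A unimodular row (a_1, ..., a_n, b) over A becomes, after the
   parts a_i (1 - p) are absorbed into the last entry, a unimodular
   k x (k + n - 1) block with k extra columns over B. Vaserstein's matrix form
   of the stable range condition for B reduces it, and multiplying back by S
   and T yields a reduction of the original row. *)

Section StableRange.
Variable R : pzRingType.

Definition right_invertible m n (M : 'M[R]_(m, n)) :=
  exists N : 'M[R]_(n, m), M *m N = 1%:M.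

Definition mx_invertible n (U : 'M[R]_n) :=
  exists V : 'M[R]_n, U *m V = 1%:M /\ V *m U = 1%:M.

Lemma right_invertible_mul m n l (M : 'M[R]_(m, n)) (N : 'M_(n, l)) :
  right_invertible M -> right_invertible N -> right_invertible (M *m N).
Proof.
case=> M' MM' [N' NN']; exists (N' *m M').
by rewrite -mulmxA (mulmxA N) NN' mul1mx.
Qed.

Lemma right_invertible_of_mul m n l (M : 'M[R]_(m, n)) (N : 'M_(n, l)) :
  right_invertible (M *m N) -> right_invertible M.
Proof. by case=> W MNW; exists (N *m W); rewrite mulmxA. Qed.

Lemma right_invertible_col_mx m1 m2 n (M : 'M[R]_(m1, n)) (N : 'M_(m2, n)) :
  right_invertible (col_mx M N) -> right_invertible M /\ right_invertible N.
Proof.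
case=> Z; rewrite mul_col_mx (scalar_mx_block m1 m2 1) /block_mx.
case/eq_col_mx => MZ NZ.
split; [exists (Z *m col_mx 1%:M 0) | exists (Z *m col_mx 0 1%:M)];
  by rewrite mulmxA ?MZ ?NZ mul_row_col !(mul1mx, mul0mx, addr0, add0r).
Qed.

Lemma mx_invertible_right n (U : 'M[R]_n) : mx_invertible U -> right_invertible U.
Proof. by case=> V [UV _]; exists V. Qed.

Lemma mx_invertible_mul n (U V : 'M[R]_n) :
  mx_invertible U -> mx_invertible V -> mx_invertible (U *m V).
Proof.
case=> U' [UU' U'U] [V' [VV' V'V]]; exists (V' *m U'); split.
  by rewrite -mulmxA (mulmxA V) VV' mul1mx.
by rewrite -mulmxA (mulmxA U') U'U mul1mx.
Qed.

Lemma mul_upper_unitri n1 n2 (X Y : 'M[R]_(n1, n2)) :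
  block_mx 1%:M X 0 1%:M *m block_mx 1%:M Y 0 1%:M = block_mx 1%:M (X + Y) 0 1%:M.
Proof. by rewrite mulmx_block !(mulmx1, mul1mx, mulmx0, mul0mx, addr0, add0r) addrC. Qed.

Lemma mul_lower_unitri n1 n2 (X Y : 'M[R]_(n2, n1)) :
  block_mx 1%:M 0 X 1%:M *m block_mx 1%:M 0 Y 1%:M = block_mx 1%:M 0 (X + Y) 1%:M.
Proof. by rewrite mulmx_block !(mulmx1, mul1mx, mulmx0, mul0mx, addr0, add0r). Qed.

Lemma upper_unitri_invertible n1 n2 (X : 'M[R]_(n1, n2)) :
  mx_invertible (block_mx 1%:M X 0 1%:M).
Proof.
by exists (block_mx 1%:M (- X) 0 1%:M); split; rewrite mul_upper_unitri ?addrN ?addNr -scalar_mx_block.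
Qed.

Lemma lower_unitri_invertible n1 n2 (X : 'M[R]_(n2, n1)) :
  mx_invertible (block_mx 1%:M 0 X 1%:M).
Proof.
by exists (block_mx 1%:M 0 (- X) 1%:M); split; rewrite mul_lower_unitri ?addrN ?addNr -scalar_mx_block.
Qed.

Lemma right_invertible_upper_block n1 n2 n3 (X : 'M[R]_(n1, n3)) (Y : 'M_(n2, n3)) :
  right_invertible Y -> right_invertible (block_mx 1%:M X 0 Y).
Proof.
case=> Z YZ; exists (block_mx 1%:M (- (X *m Z)) 0 Z).
by rewrite mulmx_block !(mulmx1, mul1mx, mulmx0, mul0mx, addr0, add0r) YZ addNr -scalar_mx_block.
Qed.

Definition stable_range n := forall (a : 'rV[R]_n) (b : 'M[R]_1),
  right_invertible (row_mx a b) -> exists c : 'rV_n, right_invertible (a + b *m c).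

Lemma stable_range_row n k (a : 'rV[R]_n) (g : 'rV_k) : stable_range n ->
  right_invertible (row_mx a g) -> exists h : 'M_(k, n), right_invertible (a + g *m h).
Proof.
move=> srn [Z]; rewrite -[Z]vsubmxK mul_row_col => agZ.
have /srn[c ac] : right_invertible (row_mx a (g *m dsubmx Z)).
  by exists (col_mx (usubmx Z) 1%:M); rewrite mul_row_col mulmx1.
by exists (dsubmx Z *m c); rewrite mulmxA.
Qed.

Lemma stable_rangeS n : stable_range n -> stable_range n.+1.
Proof.
move=> srn; change (stable_range (1 + n)) => a g [Z].
rewrite -[a]hsubmxK -[Z]vsubmxK -[usubmx Z]vsubmxK !mul_row_col.
move: (lsubmx a) (rsubmx a) (usubmx (usubmx Z)) (dsubmx (usubmx Z)) (dsubmx Z).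
move=> a0 a' x0 x' y aZ.
have /srn[c [z cz]] : right_invertible (row_mx a' (a0 *m x0 + g *m y)).
  by exists (col_mx x' 1%:M); rewrite mul_row_col mulmx1 -aZ addrCA addrA.
exists (row_mx 0 (y *m c)), (col_mx (x0 *m c *m z) z).
rewrite mul_mx_row mulmx0 add_row_mx addr0 mul_row_col -cz.
by rewrite !mulmxDl !mulmxA addrCA.
Qed.

Lemma stable_range_le n m : (n <= m)%N -> stable_range n -> stable_range m.
Proof. by move/subnK <-; elim: (m - n)%N => // d IHd /IHd; apply: stable_rangeS. Qed.

Lemma right_invertible_row_to_unit m (r : 'rV[R]_(1 + m)) : stable_range m ->
  right_invertible r -> exists2 U, mx_invertible U & r *m U = row_mx 1%:M 0.
Proof.
move=> srm [Z]; rewrite -[r]hsubmxK -[Z]vsubmxK mul_row_col.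
set r0 := lsubmx r; set r' := rsubmx r => rZ.
have /srm[c [z sz]] : right_invertible (row_mx r' r0).
  by exists (col_mx (dsubmx Z) (usubmx Z)); rewrite mul_row_col addrC.
set s := r' + r0 *m c in sz.
exists (block_mx 1%:M c 0 1%:M *m block_mx 1%:M 0 (z *m (1%:M - r0)) 1%:M
        *m block_mx 1%:M (- s) 0 1%:M).
  apply: mx_invertible_mul; first apply: mx_invertible_mul.
  - exact: upper_unitri_invertible.
  - exact: lower_unitri_invertible.
  - exact: upper_unitri_invertible.
rewrite !mulmxA !mul_row_block !(mulmx1, mulmx0, mul1mx, mul0mx, addr0, add0r).
by rewrite (addrC (r0 *m c)) -/s mulmxA sz mul1mx subrKC mul1mx addNr.
Qed.

Lemma right_invertible_pivot_elim a k n k' (q : 'M[R]_(k, a)) (F : 'M_(k, n))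
    (g : 'M_(a, k')) (G : 'M_(k, k')) :
  right_invertible (row_mx (block_mx 1%:M 0 q F) (col_mx g G)) ->
  right_invertible (row_mx F (G - q *m g)).
Proof.
move=> qFgG; have := right_invertible_mul
  (mx_invertible_right (lower_unitri_invertible (- q))) qFgG.
rewrite {2}/block_mx -block_mxEh /block_mx mul_block_col.
case/right_invertible_col_mx => _ [Z].
rewrite -[Z]vsubmxK -[usubmx Z]vsubmxK mul1mx !mul_mx_row !add_row_mx.
rewrite mulmx1 mulmx0 addNr add0r !mul_row_col mul0mx add0r mulNmx (addrC (- _)) => FGZ.
by exists (col_mx (dsubmx (usubmx Z)) (dsubmx Z)); rewrite mul_row_col.
Qed.

Lemma right_invertible_pivot_lift a k n k' (q : 'M[R]_(k, a)) (F : 'M_(k, n))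
    (g : 'M_(a, k')) (G : 'M_(k, k')) (H : 'M_(k', n)) :
  right_invertible (F + (G - q *m g) *m H) ->
  right_invertible (block_mx 1%:M 0 q F + col_mx g G *m row_mx 0 H).
Proof.
move=> FGH.
have -> : block_mx 1%:M 0 q F + col_mx g G *m row_mx 0 H =
    block_mx 1%:M 0 q 1%:M *m block_mx 1%:M (g *m H) 0 (F + (G - q *m g) *m H).
  rewrite mul_col_row add_block_mx mulmx_block.
  rewrite !(mulmx0, mulmx1, mul0mx, mul1mx, addr0, add0r).
  by rewrite mulmxBl mulmxA addrCA subrKC.
apply: right_invertible_mul (mx_invertible_right (lower_unitri_invertible q)) _.
exact: right_invertible_upper_block FGH.
Qed.

(* Vaserstein: induct on the number of rows, first moving the top row to
   [1 0] by an invertible column operation. *)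
Lemma stable_range_mx n : stable_range n.+1 ->
  forall k k' (F : 'M[R]_(k.+1, k.+1 + n)) (G : 'M_(k.+1, k')),
  right_invertible (row_mx F G) -> exists H, right_invertible (F + G *m H).
Proof.
move=> srn; elim=> [|k IHk] k'; first by move=> F G; apply: stable_range_row.
change (forall (F : 'M[R]_(1 + k.+1, 1 + (k.+1 + n))) (G : 'M_(1 + k.+1, k')),
  right_invertible (row_mx F G) -> exists H, right_invertible (F + G *m H)).
move=> F G; rewrite -[F]vsubmxK -[G]vsubmxK.
set fr := usubmx F; set Fd := dsubmx F; set gr := usubmx G; set Gd := dsubmx G.
set F' := col_mx fr Fd; set G' := col_mx gr Gd => FG.
have /right_invertible_col_mx[top _] : right_invertible (block_mx fr gr Fd Gd).
  by rewrite block_mxEh.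
have sr_top : stable_range (1 + (k.+1 + n)).
  by apply: stable_range_le srn; rewrite add1n ltnS leq_addl.
have sr_rest : stable_range (k.+1 + n).
  by apply: stable_range_le srn; rewrite addSn ltnS leq_addl.
have [h rh] := stable_range_row sr_top top.
have [U [V [UV VU]] rU] := right_invertible_row_to_unit sr_rest rh.
set W := (Fd + Gd *m h) *m U.
have FhU : (F' + G' *m h) *m U = block_mx 1%:M 0 (lsubmx W) (rsubmx W).
  by rewrite mul_col_mx add_col_mx mul_col_mx rU -/W -[W in LHS]hsubmxK.
have FGU : right_invertible (row_mx ((F' + G' *m h) *m U) G').
  have -> : row_mx ((F' + G' *m h) *m U) G' = row_mx F' G' *m block_mx U 0 (h *m U) 1%:M.
    by rewrite mul_row_block !(mulmx0, mulmx1, addr0, add0r) mulmxDl mulmxA.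
  apply: right_invertible_mul FG _; exists (block_mx V 0 (- h) 1%:M).
  rewrite mulmx_block !(mulmx0, mulmx1, mul0mx, mul1mx, addr0, add0r) UV.
  by rewrite -mulmxA UV mulmx1 addrN -scalar_mx_block.
rewrite FhU in FGU; have [H0 rH0] := IHk k' _ _ (right_invertible_pivot_elim FGU).
exists (h + row_mx 0 H0 *m V).
have -> : F' + G' *m (h + row_mx 0 H0 *m V) = ((F' + G' *m h) *m U + G' *m row_mx 0 H0) *m V.
  by rewrite mulmxDl -mulmxA UV mulmx1 mulmxDr addrA mulmxA.
apply: right_invertible_mul (mx_invertible_right (ex_intro _ U (conj VU UV))).
by rewrite FhU; apply: right_invertible_pivot_lift.
Qed.

End StableRange.

Lemma mul_mx_scalarE (R : pzRingType) m n (M : 'M[R]_(m, n)) a :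
  M *m a%:M = \matrix_(i, j) (M i j * a).
Proof.
apply/matrixP => i j; rewrite !mxE (bigD1 j) //= big1 => [|l /negPf lj].
  by rewrite mxE eqxx mulr1n addr0.
by rewrite mxE lj mulr0n mulr0.
Qed.

Local Notation cmx := (map_mx val).

Section CornerRing.
Variables (A : pzRingType) (p : A).
Hypothesis idem_p : p * p = p.

Lemma in_corner_idl x : in_corner p x -> p * x = x.
Proof. by move=> <-; rewrite !mulrA idem_p. Qed.

Lemma in_corner_idr x : in_corner p x -> x * p = x.
Proof. by move=> <-; rewrite -!mulrA idem_p. Qed.

Lemma in_corner_mul x y : in_corner p x -> in_corner p y -> in_corner p (x * y).
Proof. by move=> xp yp; rewrite /in_corner mulrA in_corner_idl // -mulrA in_corner_idr. Qed.

Definition cornerb : pred A := fun x => p * x * p == x.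

Fact cornerb_zmod_closed : zmod_closed cornerb.
Proof.
split=> [|x y /eqP xp /eqP yp]; apply/eqP; first by rewrite mulr0 mul0r.
by rewrite mulrBr mulrBl xp yp.
Qed.
HB.instance Definition _ := GRing.isZmodClosed.Build A cornerb cornerb_zmod_closed.

Lemma in_cornerP x : reflect (in_corner p x) (x \in cornerb).
Proof. exact: eqP. Qed.

Definition corner of p * p = p := {x : A | x \in cornerb}.
Local Notation B := (corner idem_p).
HB.instance Definition _ := Choice.copy B {x : A | x \in cornerb}.
HB.instance Definition _ := SubType.copy B {x : A | x \in cornerb}.
HB.instance Definition _ := [SubChoice_isSubZmodule of B by <:].

Lemma corner_val (x : B) : in_corner p (val x).
Proof. exact/in_cornerP/valP. Qed.

Fact corner_mul_subproof (x y : B) : val x * val y \in cornerb.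
Proof. by apply/eqP/in_corner_mul; apply: corner_val. Qed.

Fact corner_one_subproof : p \in cornerb.
Proof. by apply/eqP; rewrite !idem_p. Qed.

Definition corner_mul (x y : B) : B := Sub (val x * val y) (corner_mul_subproof x y).
Definition corner_one : B := Sub p corner_one_subproof.

Fact corner_mulA : associative corner_mul.
Proof. by move=> x y z; apply: val_inj; rewrite !SubK mulrA. Qed.
Fact corner_mul1r : left_id corner_one corner_mul.
Proof. by move=> x; apply: val_inj; rewrite !SubK (in_corner_idl (corner_val x)). Qed.
Fact corner_mulr1 : right_id corner_one corner_mul.
Proof. by move=> x; apply: val_inj; rewrite !SubK (in_corner_idr (corner_val x)). Qed.
Fact corner_mulDl : left_distributive corner_mul +%R.
Proof. by move=> x y z; apply: val_inj; rewrite !SubK mulrDl. Qed.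
Fact corner_mulDr : right_distributive corner_mul +%R.
Proof. by move=> x y z; apply: val_inj; rewrite !SubK mulrDr. Qed.

HB.instance Definition _ := GRing.Zmodule_isPzRing.Build B
  corner_mulA corner_mul1r corner_mulr1 corner_mulDl corner_mulDr.

Lemma corner_mxM m n l (X : 'M[B]_(m, n)) (Y : 'M_(n, l)) : cmx (X *m Y) = cmx X *m cmx Y.
Proof. by apply/matrixP => i j; rewrite !mxE raddf_sum; apply: eq_bigr => k _; rewrite !mxE. Qed.

Lemma corner_mx1 n : cmx (1%:M : 'M[B]_n) = p%:M.
Proof. by apply/matrixP => i j; rewrite !mxE; case: (i == j); rewrite ?mulr1n ?mulr0n. Qed.

Lemma corner_mx_inj m n : injective (cmx : 'M[B]_(m, n) -> 'M[A]_(m, n)).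
Proof. by move=> X Y /matrixP XY; apply/matrixP => i j; apply: val_inj; have := XY i j; rewrite !mxE. Qed.

Lemma corner_mx_idl m n (X : 'M[B]_(m, n)) : p%:M *m cmx X = cmx X.
Proof. by apply/matrixP => i j; rewrite mul_scalar_mx !mxE (in_corner_idl (corner_val _)). Qed.

Lemma corner_mx_idr m n (X : 'M[B]_(m, n)) : cmx X *m p%:M = cmx X.
Proof. by apply/matrixP => i j; rewrite mul_mx_scalarE !mxE (in_corner_idr (corner_val _)). Qed.

Lemma corner_mx_lift m n (M : 'M[A]_(m, n)) :
  p%:M *m M *m p%:M = M -> exists X : 'M[B]_(m, n), cmx X = M.
Proof.
move=> /matrixP PMP; have Mij i j : M i j \in cornerb.
  by apply/eqP; have := PMP i j; rewrite mul_mx_scalarE mul_scalar_mx !mxE.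
by exists (\matrix_(i, j) (Sub (M i j) (Mij i j) : B)); apply/matrixP => i j; rewrite !mxE SubK.
Qed.

Lemma corner_right_invertible m n (X : 'M[B]_(m, n)) (W : 'M[A]_(n, m)) :
  cmx X *m W = p%:M -> right_invertible X.
Proof.
move=> XW; have [Z cmxZ] : exists Z : 'M[B]_(n, m), cmx Z = p%:M *m W *m p%:M.
  by apply: corner_mx_lift; rewrite -!mulmxA -scalar_mxM idem_p !mulmxA -scalar_mxM idem_p.
exists Z; apply: corner_mx_inj.
by rewrite corner_mxM corner_mx1 cmxZ !mulmxA corner_mx_idr XW -scalar_mxM idem_p.
Qed.

Lemma corner_stable_range n : corner_sr_cond p n -> stable_range B n.
Proof.
move=> srp a g [Z]; rewrite -[Z]vsubmxK mul_row_col.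
move: (usubmx Z) (dsubmx Z) => x y agxy.
have agxy00 : \sum_i val (a 0 i) * val (x i 0) + val (g 0 0) * val (y 0 0) = p.
  have /matrixP/(_ 0 0) := congr1 cmx agxy.
  rewrite map_mxD !corner_mxM corner_mx1 !mxE big_ord1 eqxx mulr1n => <-.
  by apply: congr2; [apply: eq_bigr => i _ |]; rewrite !mxE.
have [c [cB red]] : corner_reducible p (fun i => val (a 0 i)) (val (g 0 0)).
  apply: srp => [i||t tB]; try exact: corner_val.
  exists (fun i => val (x i 0) * t), (val (y 0 0) * t); split.
  - by move=> i; apply: in_corner_mul tB; apply: corner_val.
  - by apply: in_corner_mul tB; apply: corner_val.
  rewrite -[RHS](in_corner_idl tB) -agxy00 mulrDl mulr_suml mulrA; congr (_ + _).
  by apply: eq_bigr => i _; rewrite mulrA.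
have [z [zB cz]] := red p (eqP corner_one_subproof).
exists (\row_i (Sub (c i) (introT (in_cornerP _) (cB i)) : B)),
       (\col_i (Sub (z i) (introT (in_cornerP _) (zB i)) : B)).
apply: corner_mx_inj; rewrite corner_mxM map_mxD corner_mxM corner_mx1.
apply/matrixP => i j; rewrite !ord1 !mxE eqxx mulr1n.
apply: etrans _ cz; apply: eq_bigr => l _.
by rewrite !mxE big_ord1 !mxE !SubK.
Qed.

End CornerRing.

Lemma sr_cond_of_stable_range (A : pzRingType) n : stable_range A n -> sr_cond A n.
Proof.
move=> srn a b /(_ 1)[c [d abcd]].
have /srn[e [Z eZ]] : right_invertible (row_mx (\row_i a i) b%:M).
  exists (col_mx (\col_i c i) d%:M); rewrite mul_row_col -scalar_mxM.
  apply/matrixP => i j; rewrite !ord1 !mxE eqxx mulr1n -abcd; congr (_ + _).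
  by apply: eq_bigr => l _; rewrite !mxE.
exists (fun i => e 0 i) => t; exists (fun i => Z i 0 * t).
have /matrixP/(_ 0 0) := eZ; rewrite !mxE eqxx mulr1n => eZ00.
rewrite -[RHS]mul1r -eZ00 mulr_suml; apply: eq_bigr => i _.
by rewrite mul_scalar_mx !mxE mulrA.
Qed.

Lemma full_idempotent_frame (A : pzRingType) (p : A) : p * p = p -> is_full p ->
  exists k (S : 'rV[A]_(1 + k)) (T : 'cV[A]_(1 + k)),
    [/\ S *m T = 1%:M, S *m p%:M = S & p%:M *m T = T].
Proof.
move=> idem_p /(_ 1)[k [u [v uv]]].
exists k, (row_mx (0 : 'M_1) (\row_i (u i * p))), (col_mx (0 : 'M_1) (\col_i (p * v i))).
rewrite !(scalar_mx_block 1 k p) mul_row_col mul_row_block mul_block_col.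
rewrite !(mulmx0, mul0mx, addr0, add0r) mul_mx_scalarE mul_scalar_mx; split.
- apply/matrixP => i j; rewrite !ord1 !mxE eqxx mulr1n uv; apply: eq_bigr => l _.
  by rewrite !mxE mulrA -(mulrA (u l)) idem_p.
- by congr row_mx; apply/matrixP => i j; rewrite !mxE -mulrA idem_p.
- by congr col_mx; apply/matrixP => i j; rewrite !mxE mulrA idem_p.
Qed.

Section Frame.
Variables (A : pzRingType) (p : A) (k : nat) (S : 'rV[A]_k.+1) (T : 'cV[A]_k.+1).
Hypotheses (idem_p : p * p = p) (ST : S *m T = 1%:M).
Hypotheses (SP : S *m p%:M = S) (PT : p%:M *m T = T).

(* E is the idempotent complementary to T S in M_k(pAp). *)
Section Complement.
Variable E : 'M[A]_k.+1.
Hypothesis TSE : T *m S + E = p%:M.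

Let E_def : E = p%:M - T *m S.
Proof. by rewrite -TSE addrC addKr. Qed.

Let SE : S *m E = 0.
Proof. by rewrite E_def mulmxBr SP mulmxA ST mul1mx subrr. Qed.

Let ET : E *m T = 0.
Proof. by rewrite E_def mulmxBl PT -mulmxA ST mulmx1 subrr. Qed.

Let EE : E *m E = E.
Proof.
by rewrite {1}E_def mulmxBl -mulmxA SE mulmx0 subr0 E_def mulmxBr -scalar_mxM idem_p mulmxA PT.
Qed.

Let STK m (X : 'M[A]_(1, m)) : S *m (T *m X) = X.
Proof. by rewrite mulmxA ST mul1mx. Qed.

Let EP : E *m p%:M = E.
Proof. by rewrite E_def mulmxBl -scalar_mxM idem_p -mulmxA SP. Qed.

Let SEK m (X : 'M[A]_(k.+1, m)) : S *m (E *m X) = 0.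
Proof. by rewrite mulmxA SE mul0mx. Qed.

Let EEK m (X : 'M[A]_(k.+1, m)) : E *m (E *m X) = E *m X.
Proof. by rewrite mulmxA EE. Qed.

Let ETK m (X : 'M[A]_(1, m)) : E *m (T *m X) = 0.
Proof. by rewrite mulmxA ET mul0mx. Qed.

(* The first entry a1 is spread over the full block T a1 S + E, which is what
   makes the lifted matrix right invertible over pAp. *)
Lemma frame_lift_equation n (a1 x1 beta y : 'M[A]_1) (a' : 'rV_n) (x' : 'cV_n) :
  a' *m p%:M = a' -> a1 *m x1 + a' *m x' + beta *m y = 1%:M ->
  row_mx (row_mx (T *m a1 *m S + E) (T *m a')) (T *m beta *m S) *m
    col_mx (col_mx (T *m x1 *m S + E) (p%:M *m x' *m S)) (T *m y *m S) = p%:M.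
Proof.
move=> a'P axy; rewrite -TSE.
have -> : T *m S = T *m (a1 *m x1 + a' *m x' + beta *m y) *m S by rewrite axy mulmx1.
rewrite !mul_row_col !mulmxDl !mulmxDr !mulmxDl -!mulmxA !STK ETK SE EE (mulmxA a') a'P.
by rewrite !(mulmx0, addr0, add0r) -!addrA [E + _]addrC -!addrA.
Qed.

Lemma frame_descend n (a1 beta : 'M[A]_1) (a' : 'rV_n) (h1 w1 : 'M_k.+1)
    (h2 : 'M_(k.+1, n)) (w2 : 'M_(n, k.+1)) :
  p%:M *m w1 = w1 ->
  (T *m a1 *m S + E + T *m beta *m S *m h1) *m w1 +
    (T *m a' + T *m beta *m S *m h2) *m w2 = p%:M ->
  right_invertible (row_mx (a1 + beta *m (S *m h1 *m T)) (a' + beta *m (S *m h2))).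
Proof.
move=> Pw1 FHw.
have Ew1 : E *m w1 = E.
  have := congr1 (mulmx E) FHw; rewrite EP !mulmxDl !mulmxDr -!mulmxA !ETK EEK.
  by rewrite !(add0r, addr0).
have w1T : w1 *m T = T *m (S *m w1 *m T).
  by rewrite -{1}Pw1 -TSE !mulmxDl Ew1 ET addr0 !mulmxA.
set w := S *m w1 *m T in w1T *.
exists (col_mx w (w2 *m T)); rewrite mul_row_col.
have := congr1 (fun M => S *m M *m T) FHw; rewrite /= SP ST => <-.
by rewrite !mulmxDl !mulmxDr !mulmxDl -!mulmxA w1T !STK SEK addr0.
Qed.

End Complement.

Lemma frame_reducible n : stable_range (corner idem_p) n.+1 ->
  forall (a1 x1 beta y : 'M[A]_1) (a' : 'rV_n) (x' : 'cV_n),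
  a' *m p%:M = a' -> a1 *m x1 + a' *m x' + beta *m y = 1%:M ->
  exists (d1 : 'M_1) (D : 'rV_n), D *m p%:M = D /\
    right_invertible (row_mx (a1 + beta *m d1) (a' + beta *m D)).
Proof.
move=> srB a1 x1 beta y a' x' a'P axy.
pose E := p%:M - T *m S; have TSE : T *m S + E = p%:M by rewrite subrKC.
have PP : p%:M *m p%:M = p%:M :> 'M[A]_k.+1 by rewrite -scalar_mxM idem_p.
have PTX m (X : 'M[A]_(1, m)) : p%:M *m (T *m X) = T *m X.
  by rewrite mulmxA PT.
have [F1 cF1] : exists F1 : 'M[corner idem_p]_k.+1, cmx F1 = T *m a1 *m S + E.
  apply: (corner_mx_lift idem_p); rewrite /E.
  by rewrite !mulmxDr !mulmxDl !mulmxN !mulNmx -!mulmxA !PTX SP !PP.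
have [F2 cF2] : exists F2 : 'M[corner idem_p]_(k.+1, n), cmx F2 = T *m a'.
  by apply: (corner_mx_lift idem_p); rewrite mulmxA PT -mulmxA a'P.
have [G cG] : exists G : 'M[corner idem_p]_k.+1, cmx G = T *m beta *m S.
  by apply: (corner_mx_lift idem_p); rewrite !mulmxA PT -!mulmxA SP.
have FG : right_invertible (row_mx (row_mx F1 F2) G).
  apply: (corner_right_invertible (W := col_mx (col_mx (T *m x1 *m S + E)
    (p%:M *m x' *m S)) (T *m y *m S))).
  by rewrite !map_row_mx cF1 cF2 cG; apply: frame_lift_equation.
have [H [Z]] := stable_range_mx srB FG.
rewrite -[H]hsubmxK -[Z]vsubmxK.
move: (lsubmx H) (rsubmx H) (usubmx Z) (dsubmx Z) => H1 H2 Z1 Z2 FHZ.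
exists (S *m cmx H1 *m T), (S *m cmx H2).
split; first by rewrite -mulmxA corner_mx_idr.
apply: (frame_descend TSE (w1 := cmx Z1) (w2 := cmx Z2)); first exact: corner_mx_idl.
have := congr1 cmx FHZ; rewrite corner_mxM map_mxD corner_mxM.
by rewrite corner_mx1 !map_row_mx !map_col_mx cF1 cF2 cG mul_mx_row add_row_mx mul_row_col.
Qed.

End Frame.

Lemma stable_range_of_full_corner (A : pzRingType) (p : A) (idem_p : p * p = p) n :
  is_full p -> stable_range (corner idem_p) n.+1 -> stable_range A n.+1.
Proof.
move=> full_p srB; have [k [S [T [ST SP PT]]]] := full_idempotent_frame idem_p full_p.
change (stable_range A (1 + n)) => a b [Z].
rewrite -[a]hsubmxK -[Z]vsubmxK -[usubmx Z]vsubmxK !mul_row_col.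
move: (lsubmx a) (rsubmx a) (usubmx (usubmx Z)) (dsubmx (usubmx Z)) (dsubmx Z).
move=> a1 a' x1 x' y axy.
(* The parts a' (1 - p) are absorbed into the last entry beta. *)
pose Q : 'M[A]_n := 1%:M - p%:M.
pose beta := a' *m Q *m x' + b *m y.
have [d1 [D [DP red]]] : exists (d1 : 'M_1) (D : 'rV_n), D *m p%:M = D /\
    right_invertible (row_mx (a1 + beta *m d1) (a' *m p%:M + beta *m D)).
  apply: (frame_reducible ST SP PT srB (x1 := x1) (x' := x') (y := 1%:M)).
    by rewrite -mulmxA -scalar_mxM idem_p.
  by rewrite mulmx1 -axy /beta addrA -(addrA (a1 *m x1)) -mulmxDl -mulmxDr subrKC mulmx1.
exists (y *m row_mx d1 D).
(* Each entry of the reduced auxiliary row is a right combination of the new row. *)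
apply: (right_invertible_of_mul (N := block_mx 1%:M 0 (Q *m x' *m d1) (p%:M + Q *m x' *m D))).
have DQ : D *m Q = 0 by rewrite mulmxBr mulmx1 DP subrr.
have a'Q : (a' + b *m y *m D) *m Q = a' *m Q by rewrite mulmxDl -mulmxA DQ mulmx0 addr0.
rewrite mulmxA mul_mx_row add_row_mx mul_row_block mulmx1 mulmx0 add0r.
rewrite mulmxDr !mulmxA a'Q mulmxDl.
rewrite -(mulmxA (b *m y)) DP.
move: red; rewrite /beta !mulmxDl (addrC (a' *m Q *m x' *m d1)).
by rewrite (addrC (a' *m Q *m x' *m D)) !addrA.
Qed.

Lemma sr_cond_of_corner_sr_cond (A : pzRingType) (p : A) n :
  is_idem p -> is_full p -> corner_sr_cond p n.+1 -> sr_cond A n.+1.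
Proof.
move=> idem_p full_p /(corner_stable_range (idem_p := idem_p)) srB.
exact/sr_cond_of_stable_range/(stable_range_of_full_corner full_p srB).
Qed.

Theorem theorem7 (A : pzRingType) (p : A) :
  is_idem p -> is_full p ->
  forall sA sP : option nat,
    is_stable_rank (@sr_cond A) sA ->
    is_stable_rank (corner_sr_cond p) sP ->
    ext_le sA sP.
Proof.
move=> idem_p full_p sA [n|] srA; last by case: sA srA.
case: n => [[]//|n [_ [srPn _]]].
have srAn := sr_cond_of_corner_sr_cond idem_p full_p srPn.
case: sA srA => [m [_ [_ minA]]|noA] /=; last exact: noA srAn.
by rewrite leqNgt; apply/negP => lt_nm; apply: minA lt_nm srAn.
Qed.
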